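(* For every $p\in[0,1]$ and $k\ge1$, there is a (randomized) Locate algorithm that runs in $k$ rounds, succeeds with probability $p$ on every input, and asks at most $p\,k\,n^{1/k}$ queries in expectation on any vector of length $n$.
   Context: Locate problem in the rank query model: there is a vector $\vec{x}=(x_1,\ldots,x_n)$ whose ranks form an unknown permutation of $\{1,\ldots,n\}$; an index $i$ is given and the goal is to output $\mathrm{rank}(x_i)$. Queries have the form ''How is $\mathrm{rank}(x_j)$ compared to $m$?'', with answer ''$<$'', ''$=$'' or ''$>$''. An algorithm runs in $k$ rounds if in each of $k$ rounds it submits a set of queries chosen depending only on answers of earlier rounds (and its randomness), then receives all answers. A randomized algorithm is a distribution over deterministic algorithms. *)

From HB Require Import structures.
From mathcomp Require Import all_boot all_order all_algebra all_fingroup.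
From mathcomp Require Import reals exp.
Set Implicit Arguments. Unset Strict Implicit. Unset Printing Implicit Defensive.
Import Order.TTheory GRing.Theory Num.Theory.
Local Open Scope ring_scope.

(* The input vector x_1..x_n is represented by the permutation s : 'S_n of
   its ranks: rank(x_j) = (s j).+1  (ranks range over 1..n). *)
Definition rank (n : nat) (s : 'S_n) (j : 'I_n) : nat := (s j).+1.

Definition query (n : nat) := ('I_n * nat)%type.

Definition answer (n : nat) (s : 'S_n) (q : query n) : comparison :=
  Nat.compare (rank s q.1) q.2.

(* Transcript: for each completed round, the list of (query, answer) pairs. *)
Definition transcript (n : nat) := seq (seq (query n * comparison)).

(* A deterministic algorithm (for vector length n and the given index i):
   the queries of the next round as a function of the earlier answers,
   and the final output as a function of all answers. *)
Record det_alg (n : nat) := DetAlg {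
  alg_round : transcript n -> seq (query n);
  alg_output : transcript n -> nat }.

Fixpoint run (n : nat) (A : det_alg n) (s : 'S_n) (r : nat) : transcript n :=
  match r with
  | 0 => [::]
  | r'.+1 => let t := run A s r' in
             rcons t [seq (q, answer s q) | q <- alg_round A t]
  end.

Definition num_queries (n : nat) (A : det_alg n) (s : 'S_n) (k : nat) : nat :=
  sumn [seq size rd | rd <- run A s k].

Definition det_output (n : nat) (A : det_alg n) (s : 'S_n) (k : nat) : nat :=
  alg_output A (run A s k).

(* A randomized algorithm: a (finitely supported) probability distribution
   over deterministic algorithms, given as a list of (weight, algorithm). *)
Definition rand_alg (R : realType) (n : nat) := seq (R * det_alg n).

Definition is_distribution (R : realType) (n : nat) (D : rand_alg R n) : Prop :=
  (forall w, w \in [seq d.1 | d <- D] -> 0 <= w) /\ \sum_(d <- D) d.1 = 1.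

Definition success_prob (R : realType) (n : nat) (D : rand_alg R n)
    (k : nat) (s : 'S_n) (i : 'I_n) : R :=
  \sum_(d <- D) d.1 * (det_output d.2 s k == rank s i)%:R.

Definition expected_queries (R : realType) (n : nat) (D : rand_alg R n)
    (k : nat) (s : 'S_n) : R :=
  \sum_(d <- D) d.1 * (num_queries d.2 s k)%:R.

From HB Require Import structures.
From mathcomp Require Import all_boot all_order all_algebra all_fingroup.
From mathcomp Require Import reals exp.
Import Order.TTheory GRing.Theory Num.Theory.
Local Open Scope ring_scope.
Set Implicit Arguments. Unset Strict Implicit.

(* Let a = floor(n^(1/k)).  Since n < (a+1)^k, the 0-based rank of x_i has
   k digits in base a+1, and one round of a queries reveals the next digit:
   comparing the rank with the a thresholds "digit > c" (c < a), the digit is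
   the number of thresholds the rank reaches.  So k rounds find the rank with
   k a <= k n^(1/k) queries.  Running this algorithm with probability p, and
   otherwise asking nothing, succeeds with probability p at expected cost
   p k n^(1/k). *)

Definition not_lt (c : comparison) : bool := if c is Lt then false else true.

Lemma not_lt_compare (x y : nat) : not_lt (Nat.compare x y) = (y <= x)%N.
Proof. by elim: x y => [|x IHx] [|y] //=; rewrite IHx. Qed.

Lemma not_lt_answer n (s : 'S_n) (j : 'I_n) (m : nat) :
  not_lt (answer s (j, m)) = (m <= rank s j)%N.
Proof. exact: not_lt_compare. Qed.

Lemma exists_nat_root (k n : nat) :
  (0 < k)%N -> exists2 a, (a ^ k <= n)%N & (n < a.+1 ^ k)%N.
Proof.
move=> k_gt0; elim: n => [|n [a a_le n_lt]]; first by exists 0%N; rewrite ?exp0n ?exp1n.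
have [n1_lt | ] := ltnP n.+1 (a.+1 ^ k); first by exists a => //; apply: leqW.
move=> a1_le; have a1_eq : (a.+1 ^ k = n.+1)%N by apply/eqP; rewrite eqn_leq a1_le.
by exists a.+1; rewrite -?a1_eq ?ltn_exp2r.
Qed.

Lemma expr_le_powR_inv (R : realType) (k : nat) (x y : R) :
  (0 < k)%N -> 0 <= x -> x ^+ k <= y -> x <= y `^ (k%:R)^-1.
Proof.
move=> k_gt0 x_ge0 xk_le_y.
have k_neq0 : (k%:R : R) != 0 by rewrite pnatr_eq0 -lt0n.
have -> : x = (x ^+ k) `^ (k%:R)^-1 by rewrite -powR_mulrn // -powRrM mulfV // powRr1.
apply: ge0_ler_powR; rewrite ?invr_ge0 ?ler0n // nnegrE ?exprn_ge0 //.
exact: le_trans (exprn_ge0 k x_ge0) xk_le_y.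
Qed.

Section Runs.
Variables (n : nat) (A : det_alg n) (s : 'S_n).

Lemma size_run r : size (run A s r) = r.
Proof. by elim: r => //= r IHr; rewrite size_rcons IHr. Qed.

Lemma num_queries_const (c : nat) :
  (forall t, size (alg_round A t) = c) -> forall k, num_queries A s k = (k * c)%N.
Proof.
move=> size_round; elim=> //= k IHk.
rewrite /num_queries /= map_rcons sumn_rcons size_map size_round.
by rewrite -/(num_queries _ _ _) IHk mulSn addnC.
Qed.

End Runs.

Definition silent_alg (n : nat) : det_alg n := DetAlg (fun _ => [::]) (fun _ => 0%N).

Lemma num_queries_silent n (s : 'S_n) k : num_queries (silent_alg n) s k = 0%N.
Proof. by rewrite (@num_queries_const _ _ _ 0) ?muln0. Qed.

Section DigitSearch.
Variables (n k a : nat) (i : 'I_n).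

Definition decoded_prefix (t : transcript n) : nat :=
  foldl (fun q rd => q * a.+1 + count (not_lt \o snd) rd)%N 0%N t.

(* In round r+1 the threshold for "digit > c" is (q (a+1) + c + 1) w + 1, where
   q is the prefix decoded so far and w = (a+1)^(k-r-1) is the weight of the
   digit; the final + 1 converts the 0-based s i to the 1-based rank. *)
Definition digit_search : det_alg n :=
  DetAlg (fun t => [seq (i, ((decoded_prefix t * a.+1 + c.+1) * a.+1 ^ (k - (size t).+1)).+1)
                   | c <- iota 0 a])
         (fun t => (decoded_prefix t).+1).

Lemma count_digit_answers (s : 'S_n) (w : nat) : (0 < w)%N ->
  let q := (s i %/ w)%N in
  count (not_lt \o snd)
    [seq (qr, answer s qr) | qr <- [seq (i, ((q %/ a.+1 * a.+1 + c.+1) * w).+1) | c <- iota 0 a]]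
  = (q %% a.+1)%N.
Proof.
move=> w_gt0 q; rewrite -map_comp count_map.
rewrite (@eq_count _ _ (fun c => c < q %% a.+1)%N) => [|c].
  have digit_le : (q %% a.+1 <= a)%N by rewrite -ltnS ltn_pmod.
  by rewrite -size_filter (@filter_iota_ltn 0 a (q %% a.+1) digit_le) size_iota.
rewrite /preim /comp /= not_lt_answer /rank ltnS -leq_divRL //.
by rewrite -/q {2}(divn_eq q a.+1) leq_add2l.
Qed.

Lemma decoded_prefix_run (s : 'S_n) : (n < a.+1 ^ k)%N ->
  forall r, (r <= k)%N -> decoded_prefix (run digit_search s r) = (s i %/ a.+1 ^ (k - r))%N.
Proof.
move=> n_lt; elim=> [|r IHr] r_le.
  by rewrite subn0 divn_small // (leq_trans (ltn_ord (s i)) (ltnW n_lt)).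
set w := (a.+1 ^ (k - r.+1))%N.
have w_gt0 : (0 < w)%N by rewrite expn_gt0.
have weight_r : (a.+1 ^ (k - r) = w * a.+1)%N by rewrite /w -expnSr subnSK.
rewrite /= /decoded_prefix foldl_rcons -/(decoded_prefix _) (IHr (ltnW r_le)) size_run.
by rewrite weight_r divnMA count_digit_answers // -divn_eq.
Qed.

Lemma digit_search_correct (s : 'S_n) :
  (n < a.+1 ^ k)%N -> det_output digit_search s k = rank s i.
Proof.
by move=> n_lt; rewrite /det_output /= decoded_prefix_run // subnn expn0 divn1.
Qed.

Lemma num_queries_digit_search (s : 'S_n) : num_queries digit_search s k = (k * a)%N.
Proof. by apply: num_queries_const => t; rewrite size_map size_iota. Qed.

End DigitSearch.

Section Mixture.
Variables (R : realType) (n : nat) (p : R) (A B : det_alg n).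
Hypothesis p_ge0 : 0 <= p.
Hypothesis p_le1 : p <= 1.

Definition bernoulli_mix : rand_alg R n := [:: (p, A); (1 - p, B)].

Lemma is_distribution_mix : is_distribution bernoulli_mix.
Proof.
split; last by rewrite !big_cons big_nil /= addr0 addrC subrK.
by move=> w; rewrite !inE => /orP[] /eqP ->; rewrite ?subr_ge0.
Qed.

Lemma success_prob_mix_ge k s i :
  det_output A s k = rank s i -> p <= success_prob bernoulli_mix k s i.
Proof.
move=> A_correct; rewrite /success_prob !big_cons big_nil /= A_correct eqxx mulr1 addr0.
by rewrite lerDl mulr_ge0 ?subr_ge0.
Qed.

Lemma expected_queries_mix k s :
  expected_queries bernoulli_mix k s
  = p * (num_queries A s k)%:R + (1 - p) * (num_queries B s k)%:R.
Proof. by rewrite /expected_queries !big_cons big_nil addr0. Qed.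

End Mixture.

Theorem proposition2 (R : realType) (p : R) (k : nat) :
  0 <= p <= 1 -> (1 <= k)%N ->
  forall (n : nat) (i : 'I_n),
  exists D : rand_alg R n,
    is_distribution D /\
    forall s : 'S_n,
      p <= success_prob D k s i /\
      expected_queries D k s <= p * k%:R * (n%:R `^ (k%:R)^-1).
Proof.
move=> /andP[p_ge0 p_le1] k_gt0 n i.
have [a ak_le_n n_lt] := exists_nat_root n k_gt0.
exists (bernoulli_mix p (digit_search k a i) (silent_alg n)).
split; first exact: is_distribution_mix.
move=> s; split; first exact/success_prob_mix_ge/digit_search_correct.
rewrite expected_queries_mix num_queries_silent num_queries_digit_search.
rewrite mulr0 addr0 natrM mulrA ler_wpM2l ?mulr_ge0 //.
by apply: expr_le_powR_inv; rewrite ?ler0n // -natrX ler_nat.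
Qed.
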